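(* Let $C_\varphi$ be a bounded composition operator on $\mathcal F(\mathbb C^d)$. Let $p\ge2$ and $\lambda\in\mathbb D^p$ with $\lambda_{p-1}=\lambda_p$. Suppose $L_1,\dots,L_p\in\mathcal F(\mathbb C^d)$ are polynomials with $C_\varphi L_i=\lambda_iL_i$ for $i=1,\dots,p-1$ and $C_\varphi L_p=\lambda_{p-1}L_p+L_{p-1}$. Then there is $J\in\mathbb N$ such that for all $j\ge J$, all $n\in\mathbb N$ and all $D\subset\{\alpha\in\mathbb N^p:|\alpha|=n\}$, $$C_\varphi^j\Big(\sum_{\alpha\in D}L^\alpha\Big)=\sum_{\alpha\in\mathbb N^p,\,|\alpha|=n}c(\alpha,D,j)L^\alpha$$ for some complex numbers $c(\alpha,D,j)$ with $|c(\alpha,D,j)|\le1$.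
   Context: $\mathcal F(\mathbb C^d)$ is the Fock space of entire functions with $\|f\|^2=(2\pi)^{-d}\int_{\mathbb C^d}|f|^2e^{-|z|^2/2}dA<\infty$; $C_\varphi f=f\circ\varphi$, bounded iff $\varphi(z)=Az+b$, $\|A\|\le1$, $\langle Av,b\rangle=0$ whenever $|Av|=|v|$. $\mathbb D$ is the open unit disc. For $\alpha\in\mathbb N^p$, $|\alpha|=\sum\alpha_i$ and $L^\alpha=\prod_{i=1}^pL_i^{\alpha_i}$. *)

From HB Require Import structures.
From mathcomp Require Import all_boot all_order all_algebra.
From mathcomp Require Import mpoly complex.
From mathcomp Require Import reals.
Set Implicit Arguments. Unset Strict Implicit. Unset Printing Implicit Defensive.
Import Order.TTheory GRing.Theory Num.Theory.
Local Open Scope ring_scope.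
Local Open Scope complex_scope.

Definition vnorm2 (R : rcfType) (d : nat) (v : 'cV[R[i]]_d) : R[i] :=
  \sum_(k < d) `|v k 0| ^+ 2.

Definition hdot (R : rcfType) (d : nat) (u w : 'cV[R[i]]_d) : R[i] :=
  \sum_(k < d) u k 0 * (w k 0)^*.

(* The affine symbol phi(z) = A z + b gives a bounded composition operator on
   the Fock space F(C^d) iff ||A|| <= 1 and <Av, b> = 0 whenever |Av| = |v|
   (characterization recalled in the paper's context). *)
Definition fock_bounded_symbol (R : rcfType) (d : nat)
    (A : 'M[R[i]]_d) (b : 'cV[R[i]]_d) : Prop :=
  (forall v : 'cV[R[i]]_d, vnorm2 (A *m v) <= vnorm2 v) /\
  (forall v : 'cV[R[i]]_d, vnorm2 (A *m v) = vnorm2 v -> hdot (A *m v) b = 0).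

Definition affine_coords (R : rcfType) (d : nat)
    (A : 'M[R[i]]_d) (b : 'cV[R[i]]_d) : d.-tuple {mpoly R[i][d]} :=
  [tuple (\sum_(j < d) A k j *: 'X_j + (b k 0)%:MP) | k < d].

Definition Cphi (R : rcfType) (d : nat) (A : 'M[R[i]]_d) (b : 'cV[R[i]]_d)
    (f : {mpoly R[i][d]}) : {mpoly R[i][d]} :=
  comp_mpoly (affine_coords A b) f.

(* L^alpha = prod_i L_i^(alpha_i)  (indices 0-based). *)
Definition Lpow (R : rcfType) (d p : nat) (L : nat -> {mpoly R[i][d]})
    (alpha : 'X_{1..p}) : {mpoly R[i][d]} :=
  \prod_(k < p) L k ^+ alpha k.

(* Write T := C_phi^j.  It is a multiplicative linear map acting on L_k by lam_k^j
   (k < p - 1) and as a Jordan block on the last two polynomials: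
   T L_p = lam^j L_p + j lam^(j-1) L_(p-1).  By the binomial theorem, T L^alpha is a sum
   over m <= alpha_p of the monomials obtained by moving m units of exponent from the
   last coordinate to the second-to-last, with coefficients of modulus at most
   C(alpha_p, m) x^|alpha| when x bounds every |lam_k^j| and |j lam^(j-1)|.  For fixed m
   this move is injective, so each coefficient of T (sum_(alpha in D) L^alpha) is at most
   sum_m C(n, m) x^n = (2x)^n, which is at most 1 for x = 1/2; and x = 1/2 works for all
   large j because j |lam|^(j-1) -> 0 when |lam| < 1. *)

From mathcomp Require Import all_boot all_order all_algebra.
From mathcomp Require Import mpoly complex reals.
From mathcomp Require Import lra zify.

Set Implicit Arguments. Unset Strict Implicit. Unset Printing Implicit Defensive.
Import Order.TTheory GRing.Theory Num.Theory.
Local Open Scope ring_scope.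
Local Open Scope complex_scope.

Definition eventually (P : nat -> Prop) := exists J, forall j, (J <= j)%N -> P j.

Lemma eventually_and (P Q : nat -> Prop) :
  eventually P -> eventually Q -> eventually (fun j => P j /\ Q j).
Proof.
move=> [J1 evP] [J2 evQ]; exists (maxn J1 J2) => j.
by rewrite geq_max => /andP[/evP ? /evQ ?].
Qed.

Lemma eventually_forall_ltn (P : nat -> nat -> Prop) n :
  (forall k, (k < n)%N -> eventually (P k)) ->
  eventually (fun j => forall k, (k < n)%N -> P k j).
Proof.
elim: n => [|n IH] evP; first by exists 0%N.
have [J evPn] :=
  eventually_and (IH (fun k lt_kn => evP k (ltnW lt_kn))) (evP n (ltnSn n)).
exists J => j /evPn[Plt Pn] k; rewrite ltnS leq_eqVlt => /orP[/eqP -> //|]; exact: Plt.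
Qed.

Lemma eventually_mulr_expr_le (R : archiRealFieldType) (t eps : R) :
  0 <= t -> t < 1 -> 0 < eps -> eventually (fun j => j%:R * t ^+ j.-1 <= eps).
Proof.
move=> t_ge0 t_lt1 eps_gt0.
have [->|t_neq0] := eqVneq t 0.
  by exists 2%N => -[|[|j]] // _; rewrite expr0n mulr0 ltW.
have t_gt0 : 0 < t by rewrite lt_def t_neq0.
set u := t^-1; set h := u - 1.
have u_gt0 : 0 < u by rewrite invr_gt0.
have h_gt0 : 0 < h by rewrite subr_gt0 invf_gt1.
(* With u = 1 + h = 1/t, u^j >= C(j, 2) h^2, so j t^(j-1) = j u / u^j <= 2 u / ((j - 1) h^2). *)
have u_expr_ge j : 'C(j, 2)%:R * h ^+ 2 <= u ^+ j.
  have -> : u = h + 1 by rewrite /h subrK.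
  have terms_ge0 (i : 'I_j.+1) : 0 <= h ^+ i *+ 'C(j, i).
    by rewrite mulrn_wge0 // exprn_ge0 // ltW.
  rewrite exprD1n; have [lt_j2|le_2j] := ltnP j 2.
    by rewrite bin_small // mul0r sumr_ge0.
  rewrite (bigD1 (Ordinal (le_2j : 2 < j.+1)%N)) //= mulr_natl lerDl.
  exact: sumr_ge0.
have bound_ge0 : 0 <= 2 * u / (eps * h ^+ 2).
  by rewrite divr_ge0 ?mulr_ge0 ?exprn_ge0 // ltW.
exists (Num.bound (2 * u / (eps * h ^+ 2))).+2 => j le_bound_j.
have t_exprE : t ^+ j.-1 = u / u ^+ j.
  rewrite /u exprVn invrK; case: j le_bound_j => [|j] // _.
  by rewrite exprS mulKf.
have binE : (2 * 'C(j, 2) = j * j.-1)%N by rewrite -mul_bin_diag bin1.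
have lt_bound : 2 * u / (eps * h ^+ 2) < (j.-1)%:R.
  apply: lt_le_trans (archi_boundP bound_ge0) _; rewrite ler_nat; lia.
rewrite ltr_pdivrMr ?mulr_gt0 ?exprn_gt0 // in lt_bound.
rewrite t_exprE mulrA ler_pdivrMr ?exprn_gt0 //.
apply: le_trans (ler_wpM2l (ltW eps_gt0) (u_expr_ge j)).
have : (2 * 'C(j, 2))%:R = j%:R * (j.-1)%:R :> R by rewrite binE natrM.
rewrite natrM.
set c := 'C(j, 2)%:R; set jr := j%:R; set jm := (j.-1)%:R => cE.
have jr_ge0 : 0 <= jr by rewrite ler0n.
nra.
Qed.

Lemma normr_expr_le_mulr (K : numDomainType) (z : K) j :
  `|z| <= 1 -> (0 < j)%N -> `|z ^+ j| <= `|j%:R * z ^+ j.-1|.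
Proof.
move=> z_le1; case: j => [|j] // _.
rewrite exprS !normrM normr_nat normrX /= ler_wpM2r ?exprn_ge0 //.
by apply: le_trans z_le1 _; rewrite ler1n.
Qed.

(* z^j and j z^(j-1) are the entries of the j-th power of the Jordan block [[z, 1], [0, z]]. *)
Lemma eventually_jordan_small (R : realType) (z : R[i]) (eps : R) :
  `|z| < 1 -> 0 < eps ->
  eventually (fun j => `|z ^+ j| <= eps%:C /\ `|j%:R * z ^+ j.-1| <= eps%:C).
Proof.
move=> z_lt1 eps_gt0.
have /complex_realP[t zE] := normr_real z.
have t_ge0 : 0 <= t by rewrite -lecR -zE rmorph0.
have t_lt1 : t < 1 by rewrite -ltcR -zE rmorph1.
have [J small] := eventually_mulr_expr_le t_ge0 t_lt1 eps_gt0.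
exists J.+1 => j le_Jj; suff mul_small : `|j%:R * z ^+ j.-1| <= eps%:C.
  split=> //; apply: le_trans mul_small; apply: normr_expr_le_mulr; last by case: j le_Jj.
  exact: ltW.
rewrite normrM normr_nat normrX zE.
rewrite -[j%:R](rmorph_nat (real_complex R)) -rmorphXn -rmorphM lecR.
exact/small/ltnW.
Qed.

Lemma iter_morph2 (T : Type) (f : T -> T) (op : T -> T -> T) :
  {morph f : x y / op x y} -> forall n, {morph iter n f : x y / op x y}.
Proof. by move=> f_op; elim=> [|n IH] x y //=; rewrite IH f_op. Qed.

Section IterateLinear.
Variables (K : pzRingType) (V : lmodType K) (T : V -> V).
Hypotheses (TD : {morph T : x y / x + y}) (TZ : forall c, {morph T : x / c *: x}).

Lemma iter_eigen (c : K) (u : V) : T u = c *: u -> forall j, iter j T u = c ^+ j *: u.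
Proof.
by move=> Tu; elim=> [|j IH] /=; rewrite ?scale1r // IH TZ Tu scalerA exprSr.
Qed.

Lemma iter_jordan (c : K) (u v : V) : T u = c *: u -> T v = c *: v + u ->
  forall j, iter j T v = c ^+ j *: v + (j%:R * c ^+ j.-1) *: u.
Proof.
move=> Tu Tv; elim=> [|j IH] /=; first by rewrite mul0r scale0r addr0 scale1r.
rewrite IH TD !TZ Tu Tv scalerDr !scalerA -exprSr -addrA -scalerDl.
congr (_ + _ *: _); case: j {IH} => [|j] /=; first by rewrite !mul0r addr0 mul1r.
by rewrite -mulrA -exprSr mulr_natl -mulrS mulr_natl.
Qed.

End IterateLinear.

Lemma sum_scale_collect_mdeg (K : pzRingType) (V : lmodType K) p n (I : finType)
    (P : pred I) (s : I -> 'X_{1..p}) (w : I -> K) (g : 'X_{1..p} -> V) :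
  (forall i, P i -> mdeg (s i) = n) ->
  \sum_(i | P i) w i *: g (s i) =
  \sum_(b : 'X_{1..p < n.+1} | mdeg b == n)
     (\sum_(i | P i && (s i == b :> 'X_{1..p})) w i) *: g b.
Proof.
move=> mdeg_s; under [RHS]eq_bigr => b _ do rewrite scaler_suml.
rewrite (exchange_big_dep P) /=; last by move=> b i _ /andP[].
apply: eq_bigr => i Pi.
have lt_si : (mdeg (s i) < n.+1)%N by rewrite mdeg_s.
rewrite (big_pred1 (BMultinom lt_si)) // => b /=.
rewrite Pi; apply/andP/eqP => [[_ /eqP si_b] | ->]; first exact/val_inj/esym.
by rewrite /= mdeg_s ?eqxx.
Qed.

Lemma norm_sum_subsingleton_le (K : numDomainType) (I : finType) (P : pred I)
    (F : I -> K) (B : K) :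
  (forall i j, P i -> P j -> i = j) -> 0 <= B -> (forall i, P i -> `|F i| <= B) ->
  `|\sum_(i | P i) F i| <= B.
Proof.
move=> P_sub B_ge0 F_le.
case: (pickP P) => [i Pi | P0]; last by rewrite big_pred0 ?normr0.
rewrite (big_pred1 i) ?F_le // => j; apply/idP/eqP => [Pj | ->//]; exact: P_sub.
Qed.

Lemma mnm_le_mdeg p (a : 'X_{1..p}) k : (a k <= mdeg a)%N.
Proof. by rewrite mdegE (bigD1 k) //= leq_addr. Qed.

Section LpowShift.
Variables (R : rcfType) (d p : nat) (L : nat -> {mpoly R[i][d]}).

Lemma LpowD (a b : 'X_{1..p}) : Lpow L (a + b)%MM = Lpow L a * Lpow L b.
Proof. by rewrite /Lpow -big_split; apply: eq_bigr => k _; rewrite mnmDE exprD. Qed.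

Lemma Lpow_mnm1Mn (k : 'I_p) m : Lpow L (U_(k) *+ m)%MM = L k ^+ m.
Proof.
rewrite /Lpow (bigD1 k) //= big1 => [|l ne_lk]; rewrite mulmnE mnm1E.
  by rewrite eqxx mul1n mulr1.
by rewrite eq_sym (negbTE ne_lk) mul0n expr0.
Qed.

Variables (i0 i1 : 'I_p).

Definition mnm_shift (a : 'X_{1..p}) (m : nat) : 'X_{1..p} :=
  (a - U_(i1) *+ m + U_(i0) *+ m)%MM.

Lemma mnm1Mn_le (a : 'X_{1..p}) m : (m <= a i1)%N -> (U_(i1) *+ m <= a)%MM.
Proof.
move=> le_m; apply/mnm_lepP => k; rewrite mulmnE mnm1E.
by case: eqP => [<-|_]; rewrite ?mul1n.
Qed.

Lemma mdeg_shift (a : 'X_{1..p}) m : (m <= a i1)%N -> mdeg (mnm_shift a m) = mdeg a.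
Proof.
move=> /mnm1Mn_le le_m; rewrite -{2}(submK le_m) /mnm_shift !mdegD.
by rewrite !mdegMn !mdeg1.
Qed.

Lemma mnm_shift_inj m (a a' : 'X_{1..p}) : (m <= a i1)%N -> (m <= a' i1)%N ->
  mnm_shift a m = mnm_shift a' m -> a = a'.
Proof.
move=> /mnm1Mn_le le_m /mnm1Mn_le le_m' /(congr1 (fun b => b - U_(i0) *+ m)%MM).
by rewrite !addmK => eq_sub; rewrite -(submK le_m) eq_sub submK.
Qed.

Lemma Lpow_shift (a : 'X_{1..p}) m : (m <= a i1)%N ->
  Lpow L (mnm_shift a m) =
  Lpow L (a - U_(i1) *+ a i1)%MM * L i1 ^+ (a i1 - m) * L i0 ^+ m.
Proof.
move=> le_m; rewrite /mnm_shift LpowD Lpow_mnm1Mn; congr (_ * _).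
rewrite -Lpow_mnm1Mn -LpowD; congr (Lpow L _).
apply/mnmP => k; rewrite !(mnmBE, mnmDE, mulmnE, mnm1E).
by case: eqP => [<-|_]; rewrite ?mul1n ?mul0n; lia.
Qed.

Variables (F : {mpoly R[i][d]} -> {mpoly R[i][d]}) (mu : nat -> R[i]) (nu om : R[i]).
Hypotheses (FM : {morph F : x y / x * y}) (F1 : F 1 = 1).
Hypothesis F_eigen : forall k : 'I_p, k != i1 -> F (L k) = mu k *: L k.
Hypothesis F_jordan : F (L i1) = nu *: L i1 + om *: L i0.

Definition jordan_coef (a : 'X_{1..p}) (m : nat) : R[i] :=
  \prod_(k < p) mu k ^+ (a - U_(i1) *+ a i1)%MM k *
  'C(a i1, m)%:R * nu ^+ (a i1 - m) * om ^+ m.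

Lemma morph_expr x n : F (x ^+ n) = F x ^+ n.
Proof. by elim: n => [|n IH]; rewrite ?expr0 // !exprS FM IH. Qed.

Lemma morph_Lpow_eigen (r : 'X_{1..p}) : r i1 = 0%N ->
  F (Lpow L r) = (\prod_(k < p) mu k ^+ r k) *: Lpow L r.
Proof.
move=> r_i1; rewrite /Lpow (big_morph F FM F1) -scaler_prod; apply: eq_bigr => k _.
have [->|ne_k] := eqVneq k i1; first by rewrite r_i1 !expr0 F1 scale1r.
by rewrite morph_expr F_eigen // exprZn.
Qed.

Lemma morph_Lpow (a : 'X_{1..p}) :
  F (Lpow L a) = \sum_(m < (a i1).+1) jordan_coef a m *: Lpow L (mnm_shift a m).
Proof.
have le_a := mnm1Mn_le (leqnn (a i1)).
have r_i1 : (a - U_(i1) *+ a i1)%MM i1 = 0%N.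
  by rewrite mnmBE mulmnE mnm1E eqxx mul1n subnn.
rewrite -{1}(submK le_a) LpowD FM morph_Lpow_eigen // Lpow_mnm1Mn morph_expr F_jordan.
rewrite exprDn mulr_sumr; apply: eq_bigr => m _.
rewrite Lpow_shift; last by rewrite -ltnS.
rewrite /jordan_coef -scaler_nat !exprZn.
by rewrite -!scalerAl -!scalerAr !scalerA !mulrA.
Qed.

Lemma norm_jordan_coef_le (x : R[i]) (a : 'X_{1..p}) m :
  0 <= x -> (forall k : 'I_p, `|mu k| <= x) -> `|nu| <= x -> `|om| <= x ->
  (m <= a i1)%N -> `|jordan_coef a m| <= 'C(a i1, m)%:R * x ^+ mdeg a.
Proof.
move=> x_ge0 mu_le nu_le om_le le_m.
set r := (a - U_(i1) *+ a i1)%MM.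
have mdeg_a : mdeg a = (mdeg r + (a i1 - m) + m)%N.
  rewrite -addnA subnK // -{1}(submK (mnm1Mn_le (leqnn (a i1)))) mdegD mdegMn mdeg1.
  by rewrite mul1n.
have expr_le (y : R[i]) n : `|y| <= x -> `|y ^+ n| <= x ^+ n.
  by move=> y_le; rewrite normrX; apply: lerXn2r; rewrite ?nnegrE ?normr_ge0.
have prod_le : `|\prod_(k < p) mu k ^+ r k| <= x ^+ mdeg r.
  rewrite mdegE -prodrXr normr_prod; apply: ler_prod => k _.
  by rewrite normr_ge0 expr_le.
rewrite mdeg_a !exprD /jordan_coef !normrM normr_nat.
rewrite !mulrA [_ * x ^+ mdeg r]mulrC.
do 3 (apply: ler_pM; rewrite ?mulr_ge0 ?normr_ge0 ?ler0n ?expr_le //).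
Qed.

Section ImageOfHomogeneousSum.
Variables (n : nat) (D : {set 'X_{1..p < n.+1}}).
Hypothesis mdeg_D : forall a, a \in D -> mdeg a = n.

Definition image_coef (b : 'X_{1..p}) : R[i] :=
  \sum_(m < n.+1) \sum_(a in D | (m <= a i1)%N && (mnm_shift a m == b)) jordan_coef a m.

Lemma norm_image_coef_le (x : R[i]) b :
  0 <= x -> (forall k : 'I_p, `|mu k| <= x) -> `|nu| <= x -> `|om| <= x ->
  `|image_coef b| <= (x *+ 2) ^+ n.
Proof.
move=> x_ge0 mu_le nu_le om_le.
apply: le_trans (ler_norm_sum _ _ _) _.
apply: (@le_trans _ _ (\sum_(m < n.+1) 'C(n, m)%:R * x ^+ n)).
  apply: ler_sum => m _; apply: norm_sum_subsingleton_le.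
  - move=> a a' /andP[_ /andP[le_a /eqP sh_a]] /andP[_ /andP[le_a' /eqP sh_a']].
    by apply/val_inj/(mnm_shift_inj le_a le_a'); rewrite sh_a sh_a'.
  - by rewrite mulr_ge0 ?ler0n ?exprn_ge0.
  - move=> a /andP[/mdeg_D mdeg_a /andP[le_m _]].
    apply: le_trans (norm_jordan_coef_le x_ge0 mu_le nu_le om_le le_m) _.
    rewrite mdeg_a ler_wpM2r ?exprn_ge0 // ler_nat leq_bin2l //.
    by have := mnm_le_mdeg a i1; rewrite mdeg_a.
have -> : x *+ 2 = x * (1 + 1) by rewrite mulrDr mulr1 mulr2n.
by rewrite exprMn exprD1n mulr_sumr; apply: ler_sum => m _; rewrite expr1n mulrC.
Qed.

Hypotheses (FD : {morph F : x y / x + y}) (F0 : F 0 = 0).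

Lemma morph_sum_Lpow :
  F (\sum_(a in D) Lpow L a) =
  \sum_(b : 'X_{1..p < n.+1} | mdeg b == n) image_coef b *: Lpow L b.
Proof.
rewrite (big_morph F FD F0).
transitivity (\sum_(a in D) \sum_(m < n.+1 | (m <= a i1)%N)
                 jordan_coef a m *: Lpow L (mnm_shift a m)).
  apply: eq_bigr => a /mdeg_D mdeg_a; rewrite morph_Lpow.
  rewrite (big_ord_widen n.+1 (fun m => jordan_coef a m *: Lpow L (mnm_shift a m))).
    by apply: eq_bigl => m; rewrite ltnS.
  by have := mnm_le_mdeg a i1; rewrite mdeg_a.
rewrite (exchange_big_dep predT) //= pair_big_dep /=.
rewrite (sum_scale_collect_mdeg (n := n)
           (s := fun q : 'I_n.+1 * 'X_{1..p < n.+1} => mnm_shift q.2 q.1)); last first.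
  by move=> q /andP[/mdeg_D mdeg_q le_q]; rewrite mdeg_shift.
apply: eq_bigr => b _; congr (_ *: _).
by rewrite /image_coef pair_big_dep; apply: eq_bigl => q; rewrite !andbA.
Qed.

End ImageOfHomogeneousSum.

End LpowShift.

Section CompositionOperator.
Variables (R : rcfType) (d : nat) (A : 'M[R[i]]_d) (b : 'cV[R[i]]_d).

Lemma CphiD : {morph Cphi A b : x y / x + y}. Proof. exact: comp_mpolyD. Qed.
Lemma CphiZ c : {morph Cphi A b : x / c *: x}. Proof. by move=> x; apply: comp_mpolyZ. Qed.
Lemma CphiM : {morph Cphi A b : x y / x * y}. Proof. by move=> x y; rewrite /Cphi rmorphM. Qed.
Lemma Cphi0 : Cphi A b 0 = 0. Proof. exact: comp_mpoly0. Qed.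
Lemma Cphi1 : Cphi A b 1 = 1. Proof. exact: comp_mpoly1. Qed.

End CompositionOperator.

Theorem mainTheorem7 (R : realType) (d p : nat)
    (A : 'M[R[i]]_d) (b : 'cV[R[i]]_d)
    (lam : nat -> R[i]) (L : nat -> {mpoly R[i][d]}) :
  fock_bounded_symbol A b ->
  (2 <= p)%N ->
  (forall k : nat, (k < p)%N -> `|lam k| < 1) ->
  lam (p - 2)%N = lam (p - 1)%N ->
  (forall k : nat, (k < p - 1)%N -> Cphi A b (L k) = lam k *: L k) ->
  Cphi A b (L (p - 1)%N) = lam (p - 2)%N *: L (p - 1)%N + L (p - 2)%N ->
  exists J : nat, forall j : nat, (J <= j)%N -> forall n : nat,
    forall D : {set 'X_{1..p < n.+1}},
      (forall a, a \in D -> mdeg a = n) ->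
      exists c : 'X_{1..p < n.+1} -> R[i],
        (forall a, `|c a| <= 1) /\
        iter j (Cphi A b) (\sum_(a in D) Lpow L a)
        = \sum_(a : 'X_{1..p < n.+1} | mdeg a == n) c a *: Lpow L a.
Proof.
move=> _ le2p lam_lt1 _ eigen_L jordan_L.
have lt_p1 : (p - 1 < p)%N by lia.
have lt_p2 : (p - 2 < p)%N by lia.
have [J small] : eventually (fun j => forall k, (k < p)%N ->
    `|lam k ^+ j| <= (2^-1)%:C /\ `|j%:R * lam k ^+ j.-1| <= (2^-1)%:C).
  apply: eventually_forall_ltn => k /lam_lt1 lam_k_lt1.
  by apply: eventually_jordan_small; rewrite ?invr_gt0.
exists J => j le_Jj n D mdeg_D.
pose mu k := lam k ^+ j; pose nu := lam (p - 2)%N ^+ j.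
pose om := j%:R * lam (p - 2)%N ^+ j.-1.
have [nu_le om_le] := small j le_Jj _ lt_p2.
have mu_le (k : 'I_p) : `|mu k| <= (2^-1)%:C by have [] := small j le_Jj k (ltn_ord k).
have half_ge0 : 0 <= (2^-1 : R)%:C by rewrite lecR invr_ge0.
exists (image_coef (Ordinal lt_p2) (Ordinal lt_p1) mu nu om D); split=> [c|].
  apply: le_trans (norm_image_coef_le _ _ mdeg_D c half_ge0 mu_le nu_le om_le) _.
  by rewrite -rmorphMn -mulr_natr mulVf ?pnatr_eq0 // rmorph1 expr1n.
apply: morph_sum_Lpow => //.
- exact: iter_morph2 (CphiM A b) j.
- exact: iter_fix (Cphi1 A b).
- move=> k ne_k; apply: (iter_eigen (CphiZ A b)); apply: eigen_L.
  by move: ne_k; rewrite -val_eqE /=; have := ltn_ord k; lia.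
- by apply: (iter_jordan (CphiD A b) (CphiZ A b) _ jordan_L); apply: eigen_L; lia.
- exact: iter_morph2 (CphiD A b) j.
- exact: iter_fix (Cphi0 A b).
Qed.
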